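(* If $M$ and $N$ are positive integers with $N\ge M$, then there exists an equal norm integer frame with $N$ elements in $\mathcal{H}_M$, i.e. an $M\times N$ integer matrix of rank $M$ all of whose columns have the same Euclidean norm.
   Context: $\mathcal{H}_M$ is the real $M$-dimensional Hilbert space, identified with $\mathbb{R}^M$ via a fixed orthonormal basis; an integer frame is a frame (spanning family) whose vectors have integer coordinates with respect to this basis. *)

From mathcomp Require Import all_boot all_order all_algebra.
Set Implicit Arguments. Unset Strict Implicit. Unset Printing Implicit Defensive.
Import Order.TTheory GRing.Theory Num.Theory.
Local Open Scope ring_scope.

Definition col_sqnorm (M N : nat) (A : 'M[int]_(M, N)) (j : 'I_N) : int :=
  \sum_(i < M) A i j ^+ 2.

(* The columns of A form a frame of H_M = R^M: A has rank M
   (rank computed over Q, which equals the rank over R). *)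
Definition int_frame (M N : nat) (A : 'M[int]_(M, N)) : Prop :=
  \rank (map_mx (fun z : int => z%:~R : rat) A) = M.

Definition equal_norm (M N : nat) (A : 'M[int]_(M, N)) : Prop :=
  forall j k : 'I_N, col_sqnorm A j = col_sqnorm A k.

From mathcomp Require Import all_boot all_order all_algebra.
Set Implicit Arguments. Unset Strict Implicit. Unset Printing Implicit Defensive.
Import Order.TTheory GRing.Theory Num.Theory.
Local Open Scope ring_scope.

(* The frame is the M x N matrix [I_M | I_M | ... ] cut off after N columns:
   every column is a standard unit vector, so all norms are 1, and its first
   M columns form the identity, so its rank is M. *)

Definition cyclic_id_mx (R : pzSemiRingType) (m n : nat) : 'M[R]_(m, n) :=
  \matrix_(i, j) ((i : nat) == (j %% m)%N)%:R.

Lemma map_cyclic_id_mx (R S : pzSemiRingType) (f : {rmorphism R -> S}) m n :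
  map_mx f (cyclic_id_mx R m n) = cyclic_id_mx S m n.
Proof. by apply/matrixP => i j; rewrite !mxE rmorph_nat. Qed.

Lemma cyclic_id_mx_pid (R : pzSemiRingType) m n : (m <= n)%N ->
  cyclic_id_mx R m n *m pid_mx m = 1%:M.
Proof.
move=> le_mn; apply/matrixP => i k.
have lt_kn : (k < n)%N by apply: leq_trans (ltn_ord k) le_mn.
rewrite !mxE (bigD1 (Ordinal lt_kn)) //= big1 => [|j ne_jk].
  by rewrite !mxE /= modn_small // eqxx ltn_ord mulr1 addr0.
by rewrite -val_eqE /= in ne_jk; rewrite !mxE (negbTE ne_jk) mulr0.
Qed.

Lemma rank_cyclic_id_mx (F : fieldType) m n : (m <= n)%N ->
  \rank (cyclic_id_mx F m n) = m.
Proof.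
move=> le_mn; apply/eqP; change (row_free (cyclic_id_mx F m n)).
by apply/row_freeP; exists (pid_mx m); apply: cyclic_id_mx_pid.
Qed.

Lemma col_sqnorm_cyclic_id_mx m n (j : 'I_n) : (0 < m)%N ->
  col_sqnorm (cyclic_id_mx int m n) j = 1.
Proof.
move=> m_gt0; rewrite /col_sqnorm (bigD1 (Ordinal (ltn_pmod j m_gt0))) //=.
rewrite mxE eqxx expr1n big1 ?addr0 // => i ne_i; rewrite mxE.
by rewrite -val_eqE /= in ne_i; rewrite (negbTE ne_i) expr0n.
Qed.

Theorem theorem7p1 (M N : nat) :
  (0 < M)%N -> (M <= N)%N ->
  exists A : 'M[int]_(M, N), int_frame A /\ equal_norm A.
Proof.
move=> M_gt0 le_MN; exists (cyclic_id_mx int M N); split.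
  rewrite /int_frame (map_cyclic_id_mx (intr : {rmorphism int -> rat})).
  exact: rank_cyclic_id_mx.
by move=> j k; rewrite !col_sqnorm_cyclic_id_mx.
Qed.
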